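(* Let $(G,o)$ be a strong orientation of a cubic graph $G$. Let $e_1=u_1v_1$ and $e_2=u_2v_2$ be two non-adjacent edges of $G$ oriented $u_1\to v_1$ and $u_2\to v_2$ in $(G,o)$, and assume both $e_1$ and $e_2$ are deletable in $(G,o)$. Let $G'$ be the cubic graph obtained from $G$ by subdividing $e_1$ with a new vertex $x_1$, subdividing $e_2$ with a new vertex $x_2$, and adding the edge $x_1x_2$. Let $(G',o')$ be the orientation of $G'$ with $u_1\to x_1$, $x_1\to v_1$, $x_1\to x_2$, $u_2\to x_2$, $x_2\to v_2$, and $o'(e)=o(e)$ for every other edge $e$ of $G'$. Then $(G',o')$ is a strong orientation and $$D(G',o')\supseteq \bigl(D(G,o)\setminus\{e_1,e_2\}\bigr)\cup\{x_1v_1,\;x_1x_2,\;u_2x_2\}.$$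
   Context: An orientation is strong if for every ordered pair of distinct vertices $u,v$ there is a directed $uv$-path. An edge $e$ is deletable in an orientation $(G,o)$ if the restriction of $o$ to $E(G)\setminus\{e\}$ is a strong orientation of $G-e$. $D(G,o)$ denotes the set of edges deletable in $(G,o)$. *)

From mathcomp Require Import all_boot.
Set Implicit Arguments. Unset Strict Implicit. Unset Printing Implicit Defensive.

Definition simple_graph (T : finType) (adj : rel T) : Prop :=
  (forall x y, adj x y = adj y x) /\ (forall x, ~~ adj x x).

Definition cubic (T : finType) (adj : rel T) : Prop :=
  forall v, #|[set w | adj v w]| = 3.

Definition is_orientation (T : finType) (adj : rel T) (o : rel T) : Prop :=
  forall x y, adj x y = (o x y || o y x) /\ ~~ (o x y && o y x).

Definition strong (T : finType) (o : rel T) : Prop :=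
  forall x y, connect o x y.

Definition del_edge (T : finType) (o : rel T) (a b : T) : rel T :=
  [rel x y | o x y && ~~ (((x == a) && (y == b)) || ((x == b) && (y == a)))].

(* The edge ab is deletable in (G,o): ab is an edge and the restriction of o
   to G - ab is strong.  D(G,o) is the set of such (unordered) edges. *)
Definition deletable (T : finType) (adj o : rel T) (a b : T) : Prop :=
  adj a b /\ strong (del_edge o a b).

Definition same_edge (T : eqType) (a b c d : T) : bool :=
  ((a == c) && (b == d)) || ((a == d) && (b == c)).

Definition x1 (T : finType) : T + bool := inr false.
Definition x2 (T : finType) : T + bool := inr true.

Definition adj' (T : finType) (adj : rel T) (u1 v1 u2 v2 : T) : rel (T + bool) :=
  fun x y =>
  match x, y with
  | inl a, inl b => adj a b && ~~ same_edge a b u1 v1 && ~~ same_edge a b u2 v2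
  | inl a, inr false => (a == u1) || (a == v1)
  | inr false, inl b => (b == u1) || (b == v1)
  | inl a, inr true => (a == u2) || (a == v2)
  | inr true, inl b => (b == u2) || (b == v2)
  | inr false, inr true => true
  | inr true, inr false => true
  | inr _, inr _ => false
  end.

Definition o' (T : finType) (o : rel T) (u1 v1 u2 v2 : T) : rel (T + bool) :=
  fun x y =>
  match x, y with
  | inl a, inl b => o a b && ~~ same_edge a b u1 v1 && ~~ same_edge a b u2 v2
  | inl a, inr false => a == u1
  | inr false, inl b => b == v1
  | inl a, inr true => a == u2
  | inr true, inl b => b == v2
  | inr false, inr true => true
  | inr _, inr _ => false
  end.

From mathcomp Require Import all_boot.

(* The new digraph (G',o') contains a copy of (G,o): every arc ab of o other
   than e1 = u1v1 and e2 = u2v2 is still an arc of o', and e1, e2 are replaced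
   by the directed paths u1 -> x1 -> v1 and u2 -> x2 -> v2.  Hence every
   directed path of G lifts to G' (connect_map), and a digraph containing a
   strong "image" of a strong digraph, in which each extra vertex is reached
   from and reaches the image, is itself strong (strong_image).
   [strong_subdivision] packages this for the graph G': a spanning strong
   sub-orientation r of o lifts to strong R on G' as soon as R keeps the
   surviving old arcs, simulates e1 and e2 when they are arcs of r, and links
   x1, x2 to the old vertices.  Each claim of the theorem is one instance:
   strongness of o' with r = o, and deletability of an edge of G' with r the
   strong restriction of o to G minus a suitable edge (o itself for x1x2,
   o - e1 for x1v1, o - e2 for u2x2, o - ab for the other deletable edges). *)

Section ImageOfStrong.
Variables (T T' : finType) (f : T -> T') (r : rel T) (r' : rel T').

Lemma connect_map :
  (forall a b, r a b -> connect r' (f a) (f b)) ->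
  forall {a b}, connect r a b -> connect r' (f a) (f b).
Proof.
move=> sim a b /connectP [p]; elim: p a => [|c p IHp] a /=; first by move=> _ ->.
by case/andP=> rac pc lastp; apply: connect_trans (sim _ _ rac) (IHp _ pc lastp).
Qed.

Lemma strong_image :
  strong r -> (forall a b, r a b -> connect r' (f a) (f b)) ->
  (forall z, exists a, connect r' (f a) z) ->
  (forall z, exists a, connect r' z (f a)) -> strong r'.
Proof.
move=> strong_r sim entry exit z w.
have [a za] := exit z; have [b bw] := entry w.
exact: connect_trans za (connect_trans (connect_map sim (strong_r a b)) bw).
Qed.

End ImageOfStrong.

Lemma del_edgeE (T : finType) (r : rel T) (a b x y : T) :
  del_edge r a b x y = r x y && ~~ same_edge x y a b.
Proof. by []. Qed.

Lemma not_both_endpoints {T : eqType} (x u v : T) : u != v -> ~~ ((x == u) && (x == v)).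
Proof.
by move=> neq_uv; apply/andP=> [[/eqP eq_xu /eqP eq_xv]]; rewrite -eq_xu -eq_xv eqxx in neq_uv.
Qed.

Lemma same_edge_sym {T : eqType} (a b c d : T) : same_edge a b c d = same_edge b a c d.
Proof. by rewrite /same_edge andbC [in RHS]andbC orbC. Qed.

Lemma inl_eq (A B : eqType) (a b : A) : (inl a == inl b :> A + B) = (a == b).
Proof. by apply/eqP/eqP => [[]|->]. Qed.
Lemma inr_eq (A B : eqType) (a b : B) : (inr a == inr b :> A + B) = (a == b).
Proof. by apply/eqP/eqP => [[]|->]. Qed.
Lemma inl_eq_inr (A B : eqType) (a : A) (b : B) : (inl a == inr b :> A + B) = false.
Proof. by apply/eqP. Qed.
Lemma inr_eq_inl (A B : eqType) (a : A) (b : B) : (inr b == inl a :> A + B) = false.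
Proof. by apply/eqP. Qed.

Lemma orientation_antisym {T : finType} {adj o : rel T} {a b : T} :
  is_orientation adj o -> o a b -> o b a = false.
Proof.
by move=> /(_ a b) [_ /negP not_both] oab; apply/negP=> oba; apply: not_both; rewrite oab.
Qed.

Lemma orientation_arc_neq {T : finType} {adj o : rel T} {a b : T} :
  is_orientation adj o -> o a b -> a != b.
Proof.
move=> orient oab; apply/eqP=> eq_ab.
by move: oab (orientation_antisym orient oab); rewrite eq_ab => ->.
Qed.

Section Subdivision.
Context {T : finType} {adj o : rel T} {u1 v1 u2 v2 : T}.
Hypothesis o_orient : is_orientation adj o.
Hypotheses (e1_arc : o u1 v1) (e2_arc : o u2 v2).

Let u1_neq_v1 : u1 != v1 := orientation_arc_neq o_orient e1_arc.
Let u2_neq_v2 : u2 != v2 := orientation_arc_neq o_orient e2_arc.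

Local Notation G' := (adj' adj u1 v1 u2 v2).
Local Notation O := (o' o u1 v1 u2 v2).

Ltac decide_sum := rewrite ?del_edgeE; unfold same_edge, x1, x2;
  rewrite /= ?inl_eq ?inr_eq ?inl_eq_inr ?inr_eq_inl ?eqxx ?(eq_sym v2)
    ?(negbTE u1_neq_v1) ?(negbTE u2_neq_v2) ?andbF ?andbT ?orbF //.
Ltac arc := apply: connect1; decide_sum.
Ltac path_via z := apply: (@connect_trans _ _ z); arc.

Lemma o'_old_arc (a b : T) :
  o a b -> ~~ ((a == u1) && (b == v1)) -> ~~ ((a == u2) && (b == v2)) ->
  O (inl a) (inl b).
Proof.
move=> oab not_e1 not_e2; rewrite /o' oab /same_edge (negbTE not_e1) (negbTE not_e2) /=.
by apply/andP; split; apply/negP=> /andP[/eqP eq_a /eqP eq_b]; move: oab;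
  rewrite eq_a eq_b ?(orientation_antisym o_orient e1_arc)
    ?(orientation_antisym o_orient e2_arc).
Qed.

Lemma o'_orientation : is_orientation G' O.
Proof.
(* Pairs of new vertices are settled by computation; an old vertex joined to
   x1 (resp. x2) cannot be both u1 and v1 (resp. u2 and v2). *)
move=> [a|[]] [b|[]] /=; last 4 first; try by rewrite ?orbF ?andbF.
- split; first by rewrite orbC.
  by rewrite andbC; apply: not_both_endpoints.
- have [-> _] := o_orient a b; rewrite !(same_edge_sym b a).
  case oab: (o a b); case oba: (o b a) => //=; last by rewrite orbF andbF.
  by rewrite (orientation_antisym o_orient oab) in oba.
- by split; last by apply: not_both_endpoints.
- by split; last by apply: not_both_endpoints.
- split; first by rewrite orbC.
  by rewrite andbC; apply: not_both_endpoints.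
Qed.

Lemma strong_subdivision {r : rel T} {R : rel (T + bool)} :
  strong r ->
  (forall a b, r a b -> ~~ ((a == u1) && (b == v1)) -> ~~ ((a == u2) && (b == v2)) ->
     R (inl a) (inl b)) ->
  (r u1 v1 -> connect R (inl u1) (inl v1)) ->
  (r u2 v2 -> connect R (inl u2) (inl v2)) ->
  (forall i, exists a, connect R (inl a) (inr i)) ->
  (forall i, exists a, connect R (inr i) (inl a)) -> strong R.
Proof.
move=> strong_r old_arc sim_e1 sim_e2 entry exit.
apply: (@strong_image _ _ inl r _ strong_r).
- move=> a b rab.
  have [/andP[/eqP eq_a /eqP eq_b]|not_e1] := boolP ((a == u1) && (b == v1)).
    by rewrite eq_a eq_b in rab *; apply: sim_e1.
  have [/andP[/eqP eq_a /eqP eq_b]|not_e2] := boolP ((a == u2) && (b == v2)).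
    by rewrite eq_a eq_b in rab *; apply: sim_e2.
  exact/connect1/old_arc.
- by case=> [a|i]; [exists a | exact: entry].
- by case=> [a|i]; [exists a | exact: exit].
Qed.

Lemma o'_strong : strong o -> strong O.
Proof.
move=> strong_o; apply: (strong_subdivision strong_o).
- by move=> a b oab; apply: o'_old_arc.
- by move=> _; path_via (x1 T).
- by move=> _; path_via (x2 T).
- by case; [exists u2 | exists u1]; arc.
- by case; [exists v2 | exists v1]; arc.
Qed.

Lemma old_edge_deletable (a b : T) :
  deletable adj o a b -> ~~ same_edge a b u1 v1 -> ~~ same_edge a b u2 v2 ->
  deletable G' O (inl a) (inl b).
Proof.
move=> [adj_ab strong_del] not_e1 not_e2; split; first by rewrite /= adj_ab not_e1 not_e2.
apply: (strong_subdivision strong_del).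
- by move=> c d /andP[ocd not_ab] not_e1' not_e2'; rewrite del_edgeE o'_old_arc.
- by move=> _; path_via (x1 T).
- by move=> _; path_via (x2 T).
- by case; [exists u2 | exists u1]; arc.
- by case; [exists v2 | exists v1]; arc.
Qed.

(* x1v1 is deletable when e1 is: the path u1 x1 x2 v2 replaces it. *)
Lemma x1v1_deletable : deletable adj o u1 v1 -> deletable G' O (x1 T) (inl v1).
Proof.
move=> [_ strong_del]; split; first by rewrite /= eqxx orbT.
apply: (strong_subdivision strong_del).
- by move=> c d /andP[ocd _] not_e1 not_e2; rewrite del_edgeE o'_old_arc //; decide_sum.
- by rewrite del_edgeE /same_edge !eqxx andbF.
- by move=> _; path_via (x2 T).
- by case; [exists u2 | exists u1]; arc.
- by case; exists v2; [arc | path_via (x2 T)].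
Qed.

(* x1x2 is always deletable: G' - x1x2 is G with e1, e2 subdivided. *)
Lemma x1x2_deletable : strong o -> deletable G' O (x1 T) (x2 T).
Proof.
move=> strong_o; split=> //; apply: (strong_subdivision strong_o).
- by move=> c d ocd not_e1 not_e2; rewrite del_edgeE o'_old_arc.
- by move=> _; path_via (x1 T).
- by move=> _; path_via (x2 T).
- by case; [exists u2 | exists u1]; arc.
- by case; [exists v2 | exists v1]; arc.
Qed.

(* u2x2 is deletable when e2 is: the path u1 x1 x2 enters x2 instead. *)
Lemma u2x2_deletable : deletable adj o u2 v2 -> deletable G' O (inl u2) (x2 T).
Proof.
move=> [_ strong_del]; split; first by rewrite /= eqxx.
apply: (strong_subdivision strong_del).
- by move=> c d /andP[ocd _] not_e1 not_e2; rewrite del_edgeE o'_old_arc //; decide_sum.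
- by move=> _; path_via (x1 T).
- by rewrite del_edgeE /same_edge !eqxx andbF.
- by case; exists u1; [path_via (x1 T) | arc].
- by case; [exists v2 | exists v1]; arc.
Qed.

End Subdivision.

Theorem mainTheorem7 (T : finType) (adj o : rel T) (u1 v1 u2 v2 : T) :
  simple_graph adj -> cubic adj ->
  is_orientation adj o -> strong o ->
  adj u1 v1 -> o u1 v1 -> adj u2 v2 -> o u2 v2 ->
  (* e1 = u1v1 and e2 = u2v2 are non-adjacent (no common endpoint) *)
  u1 != u2 -> u1 != v2 -> v1 != u2 -> v1 != v2 ->
  deletable adj o u1 v1 -> deletable adj o u2 v2 ->
  is_orientation (adj' adj u1 v1 u2 v2) (o' o u1 v1 u2 v2) /\
  strong (o' o u1 v1 u2 v2) /\
  (forall a b : T, deletable adj o a b ->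
     ~~ same_edge a b u1 v1 -> ~~ same_edge a b u2 v2 ->
     deletable (adj' adj u1 v1 u2 v2) (o' o u1 v1 u2 v2) (inl a) (inl b)) /\
  deletable (adj' adj u1 v1 u2 v2) (o' o u1 v1 u2 v2) (x1 T) (inl v1) /\
  deletable (adj' adj u1 v1 u2 v2) (o' o u1 v1 u2 v2) (x1 T) (x2 T) /\
  deletable (adj' adj u1 v1 u2 v2) (o' o u1 v1 u2 v2) (inl u2) (x2 T).
Proof.
move=> _ _ orient strong_o _ e1_arc _ e2_arc _ _ _ _ del_e1 del_e2.
split; first exact: o'_orientation orient e1_arc e2_arc.
split; first exact: o'_strong orient e1_arc e2_arc strong_o.
split; first exact: old_edge_deletable orient e1_arc e2_arc.
split; first exact: x1v1_deletable orient e1_arc e2_arc del_e1.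
split; first exact: x1x2_deletable orient e1_arc e2_arc strong_o.
exact: u2x2_deletable orient e1_arc e2_arc del_e2.
Qed.
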